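(* For any $(\boldsymbol{x},\boldsymbol{v}),(\boldsymbol{x}^\star,\boldsymbol{v}^\star)\in\mathbb{T}^3\times\mathbb{S}^2$ there exist $N\in\mathbb{N}$ and $\underline{\omega}^N=(\omega_1,\dots,\omega_N)\in\Omega_0^N$ such that $$f_{\underline{\omega}^N}(\boldsymbol{x})=\boldsymbol{x}^\star\qquad\text{and}\qquad \frac{D_{\boldsymbol{x}}f_{\underline{\omega}^N}\boldsymbol{v}}{|D_{\boldsymbol{x}}f_{\underline{\omega}^N}\boldsymbol{v}|}=\boldsymbol{v}^\star.$$
   Context: $\mathbb{T}^3=\mathbb{R}^3/(2\pi\mathbb{Z})^3$ with points $\boldsymbol{x}=(x,y,z)$; $\mathbb{S}^2\subset\mathbb{R}^3$ is the unit sphere. Fix $U>0$ and let $\Omega_0=[-U,U]^3\times[0,2\pi)^3$, with elements $\omega=(\mathsf{A},\mathsf{B},\mathsf{C},\alpha,\beta,\gamma)$. Define maps of $\mathbb{T}^3$: $f_{(\mathsf{A},\alpha)}(x,y,z)=(x+\mathsf{A}\sin(z+\alpha),\ y+\mathsf{A}\cos(z+\alpha),\ z)$, $f_{(\mathsf{B},\beta)}(x,y,z)=(x,\ y+\mathsf{B}\sin(x+\beta),\ z+\mathsf{B}\cos(x+\beta))$, $f_{(\mathsf{C},\gamma)}(x,y,z)=(x+\mathsf{C}\cos(y+\gamma),\ y,\ z+\mathsf{C}\sin(y+\gamma))$, and $f_\omega=f_{(\mathsf{C},\gamma)}\circ f_{(\mathsf{B},\beta)}\circ f_{(\mathsf{A},\alpha)}$.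 For $\underline{\omega}^N=(\omega_1,\dots,\omega_N)\in\Omega_0^N$, $f_{\underline{\omega}^N}=f_{\omega_N}\circ\cdots\circ f_{\omega_1}$, and $D_{\boldsymbol{x}}f_{\underline{\omega}^N}$ is its Jacobian matrix at $\boldsymbol{x}$. *)

From HB Require Import structures.
From mathcomp Require Import all_boot all_order all_algebra.
From mathcomp Require Import all_classical all_reals all_analysis.
Set Implicit Arguments. Unset Strict Implicit. Unset Printing Implicit Defensive.
Import Order.TTheory GRing.Theory Num.Theory.
Import numFieldNormedType.Exports.
Local Open Scope ring_scope.

Section Defs.
Variable R : realType.

(* points of R^3 (lifts of points of T^3) and tangent vectors *)
Definition vec3 (a b c : R) : 'rV[R]_3 :=
  \row_(i < 3) (if (i : nat) == 0%N then a else if (i : nat) == 1%N then b else c).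
Definition cx (p : 'rV[R]_3) := p ord0 ord0.
Definition cy (p : 'rV[R]_3) := p ord0 (inord 1).
Definition cz (p : 'rV[R]_3) := p ord0 (inord 2).

(* Euclidean norm on R^3 (the library norm on 'rV is the sup norm) *)
Definition enorm (v : 'rV[R]_3) : R := Num.sqrt (\sum_(i < 3) v ord0 i ^+ 2).

Definition on_sphere (v : 'rV[R]_3) : Prop := enorm v = 1.

Definition torus_eq (p q : 'rV[R]_3) : Prop :=
  exists k : 'I_3 -> int, forall i, q ord0 i = p ord0 i + (k i)%:~R * (2 * pi).

Record omega := Omega { oA : R; oB : R; oC : R; oal : R; obe : R; oga : R }.

Definition in_Omega0 (U : R) (w : omega) : Prop :=
  (-U <= oA w <= U) /\ (-U <= oB w <= U) /\ (-U <= oC w <= U) /\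
  (0 <= oal w < 2 * pi) /\ (0 <= obe w < 2 * pi) /\ (0 <= oga w < 2 * pi).

Fixpoint all_Omega0 (U : R) (ws : seq omega) : Prop :=
  match ws with [::] => True | w :: ws' => in_Omega0 U w /\ all_Omega0 U ws' end.

Definition fA (A al : R) (p : 'rV[R]_3) : 'rV[R]_3 :=
  vec3 (cx p + A * sin (cz p + al)) (cy p + A * cos (cz p + al)) (cz p).
Definition fB (B be : R) (p : 'rV[R]_3) : 'rV[R]_3 :=
  vec3 (cx p) (cy p + B * sin (cx p + be)) (cz p + B * cos (cx p + be)).
Definition fC (C ga : R) (p : 'rV[R]_3) : 'rV[R]_3 :=
  vec3 (cx p + C * cos (cy p + ga)) (cy p) (cz p + C * sin (cy p + ga)).

Definition f_om (w : omega) (p : 'rV[R]_3) : 'rV[R]_3 :=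
  fC (oC w) (oga w) (fB (oB w) (obe w) (fA (oA w) (oal w) p)).

(* f_{omega^N} = f_{omega_N} o ... o f_{omega_1}, with ws = [:: omega_1; ...; omega_N] *)
Definition f_seq (ws : seq omega) (p : 'rV[R]_3) : 'rV[R]_3 :=
  foldl (fun q w => f_om w q) p ws.

End Defs.

From HB Require Import structures.
From mathcomp Require Import all_boot all_order all_algebra.
From mathcomp Require Import all_classical all_reals all_analysis.
From mathcomp.algebra_tactics Require Import ring lra.
Import Order.TTheory GRing.Theory Num.Theory.
Import numFieldNormedType.Exports.
Set Implicit Arguments. Unset Strict Implicit. Unset Printing Implicit Defensive.
Local Open Scope ring_scope.

(* Each of f_A, f_B, f_C alone is a map p |-> p + a (sin(p_j + phase) e + cos(p_j + phase) e')
   along a coordinate j with e_j = e'_j = 0.  Since the phase is free, at any point it can be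
   tuned so that the map moves p by a fixed vector and has a fixed derivative there, namely a
   transvection h |-> h + h_j V; translations and derivatives therefore compose independently
   of the base point.  Large amplitudes are split into steps of size at most U, which compose
   additively.  The transvections obtained this way are invertible and generate enough of
   SL_3 to carry any nonzero vector to e1, while three of them realise any translation
   without moving e1.  Steering v to e1, translating by the required vector, and steering e1
   back to v* (by inverting the transvections that steer v* to e1) proves the theorem. *)

Section Transvection.
Variables (R : pzRingType) (n : nat) (j : 'I_n).
Implicit Types V W h : 'rV[R]_n.

Definition transvection (V h : 'rV[R]_n) : 'rV[R]_n := h + h ord0 j *: V.

Lemma transvection_coord V h : V ord0 j = 0 -> transvection V h ord0 j = h ord0 j.
Proof. by move=> Vj0; rewrite !mxE Vj0 mulr0 addr0. Qed.

Lemma transvection_fix V h : h ord0 j = 0 -> transvection V h = h.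
Proof. by move=> hj0; rewrite /transvection hj0 scale0r addr0. Qed.

Lemma transvectionD V W h : V ord0 j = 0 ->
  transvection W (transvection V h) = transvection (V + W) h.
Proof.
by move=> Vj0; rewrite {1}/transvection transvection_coord // /transvection scalerDr addrA.
Qed.

Lemma transvectionK V : V ord0 j = 0 -> cancel (transvection V) (transvection (- V)).
Proof. by move=> Vj0 h; rewrite transvectionD // subrr /transvection scaler0 addr0. Qed.

Lemma iter_transvection V k : V ord0 j = 0 ->
  iter k (transvection V) =1 transvection (V *+ k).
Proof.
move=> Vj0; elim: k => [|k IHk] h /=; first by rewrite mulr0n /transvection scaler0 addr0.
by rewrite IHk transvectionD ?mulrSr // mulmxnE Vj0 mul0rn.
Qed.

End Transvection.

Lemma is_diff_coord (R : numFieldType) n (j : 'I_n) (p : 'rV[R]_n) :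
  is_diff p (fun q : 'rV[R]_n => q ord0 j) (fun h => h ord0 j).
Proof.
have coord_linear : linear (fun q : 'rV[R]_n => q ord0 j) by move=> a u w; rewrite !mxE.
pose L : {linear 'rV[R]_n -> R} :=
  HB.pack (fun q : 'rV[R]_n => q ord0 j) (GRing.isLinear.Build _ _ _ _ _ coord_linear).
apply: DiffDef; first exact: differentiable_coord.
exact: (diff_lin p (@coord_continuous _ _ _ ord0 j : continuous L)).
Qed.

Lemma is_derive1_is_diff (R : numFieldType) (f : R -> R) (t df : R) :
  is_derive t 1 f df -> is_diff t f ( *%R^~ df).
Proof.
move=> fd; apply: DiffDef; first exact/derivable1_diffP/ex_derive.
by rewrite deriv1E ?derive1E ?derive_val //; exact: ex_derive.
Qed.

Section TrigShear.
Variables (R : realType) (n : nat) (j : 'I_n) (al : R) (u u' : 'rV[R]_n).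

Definition trig_shear (p : 'rV[R]_n) : 'rV[R]_n :=
  p + sin (p ord0 j + al) *: u + cos (p ord0 j + al) *: u'.

Lemma is_diff_trig_shear (p : 'rV[R]_n) :
  is_diff p trig_shear (transvection j (cos (p ord0 j + al) *: u - sin (p ord0 j + al) *: u')).
Proof.
set t := p ord0 j + al.
have dt : is_diff p (fun q : 'rV[R]_n => q ord0 j + al) (fun h => h ord0 j).
  apply: is_diff_eq; first exact: (is_diffD (is_diff_coord j p) (is_diff_cst al p)).
  by apply/funext => h; rewrite /= addr0.
have dsin : is_diff p (fun q : 'rV[R]_n => sin (q ord0 j + al) *: u)
    (fun h => (h ord0 j * cos t) *: u) :=
  is_diff_comp (is_diff_comp dt (is_derive1_is_diff (is_derive_sin t))) (is_diff_scalel _ u).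
have dcos : is_diff p (fun q : 'rV[R]_n => cos (q ord0 j + al) *: u')
    (fun h => (h ord0 j * - sin t) *: u') :=
  is_diff_comp (is_diff_comp dt (is_derive1_is_diff (is_derive_cos t))) (is_diff_scalel _ u').
have dsum : is_diff p trig_shear _ := is_diffD (is_diffD (is_diff_id p) dsin) dcos.
apply: is_diff_eq; apply/funext => h.
by rewrite !fctE /transvection scalerBr !scalerA mulrN scaleNr addrA.
Qed.

End TrigShear.

Lemma periodicz (U V : zmodType) (f : U -> V) (T : U) :
  periodic f T -> forall (k : int) a, f (a + T *~ k) = f a.
Proof.
move=> fT [] k a; first exact: periodicn.
by rewrite -[in RHS](subrK (T *+ k.+1) a) periodicn.
Qed.

Lemma exists_phase (R : realType) (t th : R) :
  exists al, 0 <= al < 2 * pi /\ sin (t + al) = sin th /\ cos (t + al) = cos th.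
Proof.
have pi2_gt0 : 0 < 2 * pi :> R by rewrite mulr_gt0 ?pi_gt0.
set k := Num.floor ((th - t) / (2 * pi)).
exists (th - t - k%:~R * (2 * pi)); split.
  have := floor_le ((th - t) / (2 * pi)); have := floorD1_gt ((th - t) / (2 * pi)).
  rewrite -/k intrD ltr_pdivrMr ?ler_pdivlMr //.
  by move=> ? ?; apply/andP; split; lra.
have -> : t + (th - t - k%:~R * (2 * pi)) = th + (pi *+ 2) *~ (- k).
  by rewrite mulrNz -mulrzl mulr_natl; ring.
by split; apply: periodicz; [exact: sinD2pi | exact: cosD2pi].
Qed.

Section Torus.
Variable R : realType.
Implicit Types p q v : 'rV[R]_3.

Definition e1 : 'rV[R]_3 := vec3 1 0 0.
Definition e2 : 'rV[R]_3 := vec3 0 1 0.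
Definition e3 : 'rV[R]_3 := vec3 0 0 1.

Lemma rV3P p q : cx p = cx q -> cy p = cy q -> cz p = cz q -> p = q.
Proof.
move=> px py pz; apply/rowP => -[[|[|[|//]]] i3].
- by rewrite (_ : Ordinal i3 = ord0) //; apply/val_inj.
- by rewrite (_ : Ordinal i3 = inord 1) //; apply/val_inj; rewrite /= inordK.
- by rewrite (_ : Ordinal i3 = inord 2) //; apply/val_inj; rewrite /= inordK.
Qed.

Ltac coords3 := apply: rV3P; rewrite /cx /cy /cz !mxE ?inordK //=.

Lemma fA_trig_shear A al : fA A al = trig_shear (inord 2) al (A *: e1) (A *: e2).
Proof. by apply/funext => p; rewrite /fA; coords3; ring. Qed.

Lemma fB_trig_shear B be : fB B be = trig_shear ord0 be (B *: e2) (B *: e3).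
Proof. by apply/funext => p; rewrite /fB; coords3; ring. Qed.

Lemma fC_trig_shear C ga : fC C ga = trig_shear (inord 1) ga (C *: e3) (C *: e1).
Proof. by apply/funext => p; rewrite /fC; coords3; ring. Qed.

Lemma trig_shear0 n (j : 'I_n) (al : R) : trig_shear j al 0 0 = id.
Proof. by apply/funext => p; rewrite /trig_shear !scaler0 !addr0. Qed.

Section Realizable.
Variable U : R.
Implicit Types (ws : seq (omega R)) (d : 'rV[R]_3) (M : 'rV[R]_3 -> 'rV[R]_3).

Lemma in_Omega0_single_shear a al : `|a| <= U -> 0 <= al < 2 * pi ->
  [/\ in_Omega0 U (Omega a 0 0 al 0 0), in_Omega0 U (Omega 0 a 0 0 al 0)
    & in_Omega0 U (Omega 0 0 a 0 0 al)].
Proof.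
rewrite ler_norml => aU al_range.
have U_ge0 : 0 <= U by move: aU => /andP[]; lra.
have zero_U : - U <= 0 <= U by apply/andP; split; lra.
have pi2_gt0 : 0 < 2 * pi :> R by rewrite mulr_gt0 ?pi_gt0.
have zero_2pi : (0 : R) <= 0 < (2 * pi : R) by rewrite lexx pi2_gt0.
by split; do !split.
Qed.

(* Uniformity in the base point [x] is what allows free concatenation. *)
Definition realizable (d : 'rV[R]_3) (M : 'rV[R]_3 -> 'rV[R]_3) : Prop :=
  forall x, exists2 ws, all_Omega0 U ws & f_seq ws x = x + d /\ is_diff x (f_seq ws) M.

Lemma all_Omega0_cat ws1 ws2 :
  all_Omega0 U ws1 -> all_Omega0 U ws2 -> all_Omega0 U (ws1 ++ ws2).
Proof. by elim: ws1 => [|w ws1 IH] //= [wU ws1U] ws2U; split; last exact: IH. Qed.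

Lemma f_seq_cat ws1 ws2 : f_seq (ws1 ++ ws2) = f_seq ws2 \o f_seq ws1.
Proof. by apply/funext => p; rewrite /f_seq foldl_cat. Qed.

Lemma realizable0 : realizable 0 id.
Proof. by move=> x; exists [::]; rewrite // addr0; split=> //; exact: is_diff_id. Qed.

Lemma realizable_comp d1 d2 M1 M2 :
  realizable d1 M1 -> realizable d2 M2 -> realizable (d1 + d2) (M2 \o M1).
Proof.
move=> r1 r2 x; have [ws1 ws1U [f1x df1]] := r1 x; have [ws2 ws2U [f2x df2]] := r2 (x + d1).
exists (ws1 ++ ws2); first exact: all_Omega0_cat.
rewrite f_seq_cat /= f1x f2x addrA; split=> //.
by apply: is_diff_comp; rewrite f1x.
Qed.

Lemma realizable_iter d M k : realizable d M -> realizable (d *+ k) (iter k M).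
Proof.
move=> r; elim: k => [|k IHk]; first exact: realizable0.
by rewrite mulrSr; exact: realizable_comp IHk r.
Qed.

Definition shear_family (j : 'I_3) (e e' : 'rV[R]_3) : Prop :=
  [/\ e ord0 j = 0, e' ord0 j = 0 &
    forall a al, `|a| <= U -> 0 <= al < 2 * pi ->
      exists2 w, in_Omega0 U w & f_om w = trig_shear j al (a *: e) (a *: e')].

Lemma shear_familyA : shear_family (inord 2) e1 e2.
Proof.
split; rewrite ?mxE ?inordK // => a al aU al_range.
have [wU _ _] := in_Omega0_single_shear aU al_range.
exists (Omega a 0 0 al 0 0) => //.
by rewrite /f_om fB_trig_shear fC_trig_shear /= !scale0r !trig_shear0 fA_trig_shear.
Qed.

Lemma shear_familyB : shear_family ord0 e2 e3.
Proof.
split; rewrite ?mxE // => a al aU al_range.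
have [_ wU _] := in_Omega0_single_shear aU al_range.
exists (Omega 0 a 0 0 al 0) => //.
by rewrite /f_om fA_trig_shear fC_trig_shear /= !scale0r !trig_shear0 fB_trig_shear.
Qed.

Lemma shear_familyC : shear_family (inord 1) e3 e1.
Proof.
split; rewrite ?mxE ?inordK // => a al aU al_range.
have [_ _ wU] := in_Omega0_single_shear aU al_range.
exists (Omega 0 0 a 0 0 al) => //.
by rewrite /f_om fA_trig_shear fB_trig_shear /= !scale0r !trig_shear0 fC_trig_shear.
Qed.

Hypothesis U_gt0 : 0 < U.

Lemma realizable_any_amplitude (j : 'I_3) (X V : 'rV[R]_3) : V ord0 j = 0 ->
  (forall a, `|a| <= U -> realizable (a *: X) (transvection j (a *: V))) ->
  forall a, realizable (a *: X) (transvection j (a *: V)).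
Proof.
move=> Vj0 small a; set k := (Num.truncn (`|a| / U)).+1.
have k_gt0 : 0 < k%:R :> R by rewrite ltr0n.
have step_small : `|a / k%:R| <= U.
  rewrite normrM normfV (gtr0_norm k_gt0) ler_pdivrMr // mulrC -ler_pdivrMr //.
  exact/ltW/truncnS_gt.
have := realizable_iter k (small _ step_small).
have -> : iter k (transvection j ((a / k%:R) *: V)) = transvection j (a *: V).
  apply/funext => h; rewrite iter_transvection ?mxE ?Vj0 ?mulr0 //.
  by rewrite scalerMnl -mulr_natr divfK ?gt_eqF.
by rewrite scalerMnl -mulr_natr divfK ?gt_eqF.
Qed.

Definition reachable M := exists d, realizable d M.

Definition reversible M := reachable M /\ exists2 M', reachable M' & cancel M M'.

Lemma reversible_id : reversible id.
Proof.
have r : reachable id by exists 0; exact: realizable0.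
by split=> //; exists id.
Qed.

Lemma reversible_comp M N : reversible M -> reversible N -> reversible (N \o M).
Proof.
move=> [[dM rM] [M' [dM' rM'] MK]] [[dN rN] [N' [dN' rN'] NK]].
split; first by exists (dM + dN); exact: realizable_comp.
exists (M' \o N'); first by exists (dN' + dM'); exact: realizable_comp.
by move=> h /=; rewrite NK MK.
Qed.

Section ShearFamily.
Variables (j : 'I_3) (e e' : 'rV[R]_3).
Hypothesis fam : shear_family j e e'.

Lemma realizable_shear_bounded th a : `|a| <= U ->
  realizable (a *: (sin th *: e + cos th *: e'))
             (transvection j (a *: (cos th *: e - sin th *: e'))).
Proof.
move=> aU x; have [_ _ famE] := fam.
have [al [al_range [sinE cosE]]] := exists_phase (x ord0 j) th.
(* with this phase the shear behaves at [x] as if [x ord0 j + al] were [th] *)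
have [w wU fw] := famE a al aU al_range.
exists [:: w] => //; rewrite /f_seq /= fw; split.
  by rewrite /trig_shear sinE cosE -addrA scalerDr !scalerA [a * _]mulrC [a * cos th]mulrC.
have := is_diff_trig_shear j al (a *: e) (a *: e') x.
by rewrite sinE cosE scalerBr !scalerA [a * _]mulrC [a * sin th]mulrC.
Qed.

Lemma realizable_shear th a :
  realizable (a *: (sin th *: e + cos th *: e'))
             (transvection j (a *: (cos th *: e - sin th *: e'))).
Proof.
have [ej0 e'j0 _] := fam.
apply: realizable_any_amplitude (realizable_shear_bounded th) a.
by rewrite !mxE ej0 e'j0 !mulr0 subr0.
Qed.

Lemma realizable_shear_cos a : realizable (a *: e') (transvection j (a *: e)).
Proof.
by have := realizable_shear 0 a; rewrite sin0 cos0 !scale0r !scale1r add0r subr0.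
Qed.

Lemma realizable_shear_sin a : realizable (a *: e) (transvection j (- (a *: e'))).
Proof.
have := realizable_shear (pi / 2) a.
by rewrite sin_pihalf cos_pihalf !scale0r !scale1r addr0 sub0r scalerN.
Qed.

Lemma reversible_transvection a :
  reversible (transvection j (a *: e)) /\ reversible (transvection j (a *: e')).
Proof.
have [ej0 e'j0 _] := fam.
have rcos b : reachable (transvection j (b *: e)) by exists (b *: e'); exact: realizable_shear_cos.
have rsin b : reachable (transvection j (b *: e')).
  by exists ((- b) *: e); rewrite -[b *: e']opprK -scaleNr; exact: realizable_shear_sin.
split; split=> //.
  exists (transvection j ((- a) *: e)) => //.
  by rewrite scaleNr; apply: transvectionK; rewrite mxE ej0 mulr0.
exists (transvection j ((- a) *: e')) => //.
by rewrite scaleNr; apply: transvectionK; rewrite mxE e'j0 mulr0.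
Qed.

End ShearFamily.

Lemma steer_y_nonzero v : v != 0 -> exists2 M, reversible M & cy (M v) != 0.
Proof.
move=> v0; have [vy0|] := eqVneq (cy v) 0; last by exists id; first exact: reversible_id.
have [vx0|vx0] := eqVneq (cx v) 0.
  have vz0 : cz v != 0.
    apply: contraNneq v0 => vz0.
    by apply/eqP; apply: rV3P; rewrite ?vx0 ?vy0 ?vz0 /cx /cy /cz !mxE.
  exists (transvection (inord 2) (1 *: e2)).
    exact: (reversible_transvection shear_familyA 1).2.
  by move: vy0 vz0; rewrite /cy /cz !mxE !inordK //= => ->; rewrite add0r !mulr1.
exists (transvection ord0 (1 *: e2)).
  exact: (reversible_transvection shear_familyB 1).1.
by move: vy0 vx0; rewrite /cx /cy !mxE !inordK //= => ->; rewrite add0r !mulr1.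
Qed.

Lemma steer_to_e1 v : v != 0 -> exists2 M, reversible M & M v = e1.
Proof.
move=> /steer_y_nonzero[M0 rM0]; set w := M0 v => wy0.
(* first make the x-coordinate 1 using w_y != 0, then clear the y- and z-coordinates *)
exists (transvection ord0 ((- cz w) *: e3) \o transvection ord0 ((- cy w) *: e2)
        \o transvection (inord 1) (((1 - cx w) / cy w) *: e1) \o M0).
  do !apply: reversible_comp => //.
  - exact: (reversible_transvection shear_familyC _).2.
  - exact: (reversible_transvection shear_familyB _).1.
  - exact: (reversible_transvection shear_familyB _).2.
rewrite /= -/w; move: wy0; rewrite /cy => wy0.
by coords3; field.
Qed.

Lemma realizable_translation d : exists2 M, realizable d M & M e1 = e1.
Proof.
have rx := realizable_shear_sin shear_familyA (cx d).
have ry := realizable_shear_cos shear_familyA (cy d).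
have rz := realizable_shear_sin shear_familyC (cz d).
have dE : cx d *: e1 + cy d *: e2 + cz d *: e3 = d by coords3; ring.
exists (transvection (inord 1) (- (cz d *: e1)) \o (transvection (inord 2) (cy d *: e1)
        \o transvection (inord 2) (- (cx d *: e2)))).
  by rewrite -{1}dE; apply: realizable_comp rz; exact: realizable_comp.
by rewrite /= !transvection_fix // mxE inordK.
Qed.

End Realizable.
End Torus.

Lemma sphere_neq0 (R : realType) (v : 'rV[R]_3) : on_sphere v -> v != 0.
Proof.
rewrite /on_sphere /enorm; apply: contra_eqN => /eqP ->.
rewrite big1 => [|i _]; first by rewrite sqrtr0 eq_sym oner_neq0.
by rewrite mxE expr0n.
Qed.

Theorem proposition3p2 (R : realType) (U : R) (hU : 0 < U)
  (x v xs vs : 'rV[R]_3) (hv : on_sphere v) (hvs : on_sphere vs) :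
  exists (N : nat) (ws : seq (omega R)),
    [/\ size ws = N,
        all_Omega0 U ws,
        torus_eq (f_seq ws x) xs
      & (enorm ('d (f_seq ws) x v))^-1 *: ('d (f_seq ws) x v) = vs].
Proof.
have [M1 [[d1 rM1] _] M1v] := steer_to_e1 hU (sphere_neq0 hv).
have [M3 [_ [M3' [d3 rM3'] M3K]] M3vs] := steer_to_e1 hU (sphere_neq0 hvs).
have [M2 rM2 M2e1] := realizable_translation hU (xs - x - d1 - d3).
have [ws wsU [fx df]] := realizable_comp (realizable_comp rM1 rM2) rM3' x.
exists (size ws), ws; split=> //.
  by exists (fun=> 0) => i; rewrite fx mul0r addr0 !mxE; ring.
by rewrite diff_val /= M1v M2e1 -M3vs M3K hvs invr1 scale1r.
Qed.
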